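(* Let $T=(\{T_g\}_{g\in G},\{\gamma_{g,h}\}_{g,h\in G},u)$ be an action of a group $G$ on a semigroupal category $\mathcal{C}$ and let $\mathcal{I}$ be an ideal of $\mathcal{C}$. Then (1) $\overline{T_e(\mathcal{I})}=\mathcal{I}$; (2) $\overline{T_g(\overline{T_h(\mathcal{I})})}=\overline{T_{gh}(\mathcal{I})}$ for all $g,h\in G$.
   Context: A semigroupal category is a (strict) category with a tensor product functor and associator satisfying the pentagon axiom. An action of a group $G$ (with unit $e$) on $\mathcal{C}$ is a monoidal functor from $G$ (viewed as a discrete monoidal category) to the monoidal category of semigroupal auto-equivalences of $\mathcal{C}$; concretely, a triple consisting of semigroupal auto-equivalences $T_g$ of $\mathcal{C}$, natural isomorphisms of semigroupal functors $\gamma_{g,h}\colon T_gT_h\Rightarrow T_{gh}$ and $u\colon\mathrm{Id}_{\mathcal{C}}\Rightarrow T_e$, such that $(\gamma_{gh,k})_X\circ(\gamma_{g,h})_{T_k(X)}=(\gamma_{g,hk})_X\circ T_g((\gamma_{h,k})_X)$ for all $g,h,k$ and $X$, and such that $u_{T_g(X)}$ and $(\gamma_{e,g})_X$ are mutually inverse, as are $T_g(u_X)$ and $(\gamma_{g,e})_X$. For a subcategory $\mathcal{D}$, $\overline{\mathcal{D}}$ denotes its isomorphism closure: the smallest subcategory of $\mathcal{C}$ containing $\mathcal{D}$ and closed under isomorphisms (for each object $X$ in it and each isomorphism $\varphi\colon X\to X'$ in $\mathcal{C}$, $X'$ and $\varphi$ are in it). An ideal of $\mathcal{C}$ is a subcategory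 closed under isomorphisms such that $X\otimes Y$ and $Y\otimes X$ are objects of it whenever $X$ is an object of it and $Y$ is any object of $\mathcal{C}$. For a functor $T_g$ and subcategory $\mathcal{I}$, $T_g(\mathcal{I})$ denotes the image subcategory. *)

Set Implicit Arguments.
Unset Strict Implicit.
Set Universe Polymorphism.

Record Group := {
  gcar :> Type;
  gmul : gcar -> gcar -> gcar;
  gone : gcar;
  ginv : gcar -> gcar;
  gmulA : forall x y z, gmul x (gmul y z) = gmul (gmul x y) z;
  gmul1 : forall x, gmul gone x = x;
  gmulr1 : forall x, gmul x gone = x;
  gmulV : forall x, gmul (ginv x) x = gone;
  gmulVr : forall x, gmul x (ginv x) = gone
}.
Arguments gmul {g}.
Arguments gone {g}.

Record Category := {
  Obj :> Type;
  Hom : Obj -> Obj -> Type;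
  idm : forall A, Hom A A;
  comp : forall A B C, Hom B C -> Hom A B -> Hom A C;
  comp_assoc : forall A B C D (h : Hom C D) (g : Hom B C) (f : Hom A B),
      comp h (comp g f) = comp (comp h g) f;
  comp_id_l : forall A B (f : Hom A B), comp (idm B) f = f;
  comp_id_r : forall A B (f : Hom A B), comp f (idm A) = f
}.
Arguments Hom {c}.
Arguments idm {c}.
Arguments comp {c A B C}.

Definition is_iso {C : Category} {A B : C} (f : Hom A B) : Prop :=
  exists g : Hom B A, comp g f = idm A /\ comp f g = idm B.

Record Functor (C D : Category) := {
  fobj :> C -> D;
  fmap : forall A B, Hom A B -> Hom (fobj A) (fobj B);
  fmap_id : forall A, fmap (idm A) = idm (fobj A);
  fmap_comp : forall A B E (g : Hom B E) (f : Hom A B),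
      fmap (comp g f) = comp (fmap g) (fmap f)
}.
Arguments fmap {C D} _ {A B}.

Record SemigroupalCategory := {
  scat :> Category;
  tens : scat -> scat -> scat;
  tensm : forall A B A' B', Hom A A' -> Hom B B' -> Hom (tens A B) (tens A' B');
  tensm_id : forall A B, tensm (idm A) (idm B) = idm (tens A B);
  tensm_comp : forall A B A' B' A'' B'' (f' : Hom A' A'') (g' : Hom B' B'')
      (f : Hom A A') (g : Hom B B'),
      tensm (comp f' f) (comp g' g) = comp (tensm f' g') (tensm f g);
  assoc : forall X Y Z, Hom (tens (tens X Y) Z) (tens X (tens Y Z));
  assoc_iso : forall X Y Z, is_iso (assoc X Y Z);
  assoc_nat : forall X Y Z X' Y' Z' (f : Hom X X') (g : Hom Y Y') (h : Hom Z Z'),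
      comp (assoc X' Y' Z') (tensm (tensm f g) h)
      = comp (tensm f (tensm g h)) (assoc X Y Z);
  pentagon : forall W X Y Z,
      comp (assoc W X (tens Y Z)) (assoc (tens W X) Y Z)
      = comp (tensm (idm W) (assoc X Y Z))
          (comp (assoc W (tens X Y) Z) (tensm (assoc W X Y) (idm Z)))
}.
Arguments tens {s}.
Arguments tensm {s A B A' B'}.
Arguments assoc {s}.

Record SemigroupalFunctor (C : SemigroupalCategory) := {
  sfun :> Functor C C;
  sJ : forall X Y, Hom (tens (sfun X) (sfun Y)) (sfun (tens X Y));
  sJ_iso : forall X Y, is_iso (sJ X Y);
  sJ_nat : forall X Y X' Y' (f : Hom X X') (g : Hom Y Y'),
      comp (fmap sfun (tensm f g)) (sJ X Y) = comp (sJ X' Y') (tensm (fmap sfun f) (fmap sfun g));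
  sJ_assoc : forall X Y Z,
      comp (fmap sfun (assoc X Y Z))
        (comp (sJ (tens X Y) Z) (tensm (sJ X Y) (idm (sfun Z))))
      = comp (sJ X (tens Y Z))
          (comp (tensm (idm (sfun X)) (sJ Y Z)) (assoc (sfun X) (sfun Y) (sfun Z)))
}.
Arguments sJ {C} s X Y.

Definition is_equivalence {C : Category} (F : Functor C C) : Prop :=
  exists (Gf : Functor C C) (eta : forall X, Hom X (Gf (F X)))
         (eps : forall Y, Hom (F (Gf Y)) Y),
    (forall X, is_iso (eta X)) /\ (forall Y, is_iso (eps Y)) /\
    (forall X X' (f : Hom X X'), comp (eta X') f = comp (fmap Gf (fmap F f)) (eta X)) /\
    (forall Y Y' (f : Hom Y Y'), comp (eps Y') (fmap F (fmap Gf f)) = comp f (eps Y)).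

Definition htr {G : Group} {C : Category} (T : G -> Functor C C) (A : C) (X : C)
  {a b : G} (p : a = b) (f : Hom A (T a X)) : Hom A (T b X) :=
  eq_rect a (fun c => Hom A (T c X)) f b p.
Arguments htr {G C} T {A} X {a b} p f.

Record Action (G : Group) (C : SemigroupalCategory) := {
  actT :> G -> SemigroupalFunctor C;
  actT_equiv : forall g, is_equivalence (actT g);
  gam : forall g h X, Hom (actT g (actT h X)) (actT (gmul g h) X);
  gam_iso : forall g h X, is_iso (gam g h X);
  gam_nat : forall g h X Y (f : Hom X Y),
      comp (fmap (actT (gmul g h)) f) (gam g h X)
      = comp (gam g h Y) (fmap (actT g) (fmap (actT h) f));
  (* gamma is a morphism of semigroupal functors T_g T_h => T_gh *)
  gam_mon : forall g h X Y,
      comp (gam g h (tens X Y))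
        (comp (fmap (actT g) (sJ (actT h) X Y)) (sJ (actT g) (actT h X) (actT h Y)))
      = comp (sJ (actT (gmul g h)) X Y) (tensm (gam g h X) (gam g h Y));
  uu : forall X, Hom X (actT gone X);
  uu_iso : forall X, is_iso (uu X);
  uu_nat : forall X Y (f : Hom X Y),
      comp (fmap (actT gone) f) (uu X) = comp (uu Y) f;
  (* u is a morphism of semigroupal functors Id => T_e (Id has identity structure) *)
  uu_mon : forall X Y,
      comp (uu (tens X Y)) (idm (tens X Y)) = comp (sJ (actT gone) X Y) (tensm (uu X) (uu Y));
  gam_cocycle : forall g h k X,
      comp (gam (gmul g h) k X) (gam g h (actT k X))
      = htr (fun a => sfun (actT a)) X (gmulA g h k)
          (comp (gam g (gmul h k) X) (fmap (actT g) (gam h k X)));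
  gam_unit_l : forall g X,
      comp (htr (fun a => sfun (actT a)) X (gmul1 g) (gam gone g X)) (uu (actT g X))
        = idm (actT g X) /\
      comp (uu (actT g X)) (htr (fun a => sfun (actT a)) X (gmul1 g) (gam gone g X))
        = idm (actT gone (actT g X));
  gam_unit_r : forall g X,
      comp (htr (fun a => sfun (actT a)) X (gmulr1 g) (gam g gone X)) (fmap (actT g) (uu X))
        = idm (actT g X) /\
      comp (fmap (actT g) (uu X)) (htr (fun a => sfun (actT a)) X (gmulr1 g) (gam g gone X))
        = idm (actT g (actT gone X))
}.

Record SubClass (C : Category) := {
  sobj : C -> Prop;
  smor : forall A B : C, Hom A B -> Prop
}.
Arguments sobj {C}.
Arguments smor {C} s {A B}.

Definition is_subcategory {C : Category} (S : SubClass C) : Prop :=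
  (forall A B (f : Hom A B), smor S f -> sobj S A /\ sobj S B) /\
  (forall A, sobj S A -> smor S (idm A)) /\
  (forall A B E (g : Hom B E) (f : Hom A B), smor S f -> smor S g -> smor S (comp g f)).

Definition iso_closed {C : Category} (S : SubClass C) : Prop :=
  forall X X' (phi : Hom X X'), sobj S X -> is_iso phi -> sobj S X' /\ smor S phi.

Definition sub_le {C : Category} (D S : SubClass C) : Prop :=
  (forall X, sobj D X -> sobj S X) /\ (forall A B (f : Hom A B), smor D f -> smor S f).

Definition sub_eq {C : Category} (D S : SubClass C) : Prop := sub_le D S /\ sub_le S D.

(* isomorphism closure: the smallest subcategory containing D and closed under isos *)
Definition iso_closure {C : Category} (D : SubClass C) : SubClass C := {|
  sobj := fun X => forall S, is_subcategory S -> iso_closed S -> sub_le D S -> sobj S X;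
  smor := fun A B f => forall S, is_subcategory S -> iso_closed S -> sub_le D S -> smor S f
|}.

Definition image {C : Category} (F : Functor C C) (I : SubClass C) : SubClass C := {|
  sobj := fun Y => exists X, sobj I X /\ F X = Y;
  smor := fun A B h => exists X Y (f : Hom X Y), smor I f /\
      existT (fun A' => {B' : C & Hom A' B'}) A (existT _ B h)
      = existT (fun A' => {B' : C & Hom A' B'}) (F X) (existT _ (F Y) (fmap F f))
|}.

Definition is_ideal {C : SemigroupalCategory} (I : SubClass C) : Prop :=
  is_subcategory I /\ iso_closed I /\
  (forall X Y : C, sobj I X -> sobj I (tens X Y) /\ sobj I (tens Y X)).

(* The unit u : Id => T_e and the multiplication gamma : T_g T_h => T_gh are
   natural isomorphisms, and the isomorphism closure of an image only depends
   on the functor up to natural isomorphism, since an isomorphism-closed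
   subcategory contains F X, F f exactly when it contains F' X, F' f.  The
   closure of the image of the closure of an image is the closure of the image
   under the composite, because image F is left adjoint to preimage F and the
   preimage of an isomorphism-closed subcategory is again one. *)

Section Functors.
Context {C : Category}.

Definition functor_id : Functor C C.
Proof.
  refine {| fobj := fun X => X; fmap := fun _ _ f => f |}; reflexivity.
Defined.

Definition functor_comp (F H : Functor C C) : Functor C C.
Proof.
  refine {| fobj := fun X => F (H X); fmap := fun _ _ f => fmap F (fmap H f) |}.
  - intros A. rewrite !fmap_id. reflexivity.
  - intros A B E g f. rewrite !fmap_comp. reflexivity.
Defined.

Definition natural_iso (F F' : Functor C C) (alpha : forall X, Hom (F X) (F' X)) : Prop :=
  (forall X, is_iso (alpha X)) /\
  (forall X Y (f : Hom X Y), comp (fmap F' f) (alpha X) = comp (alpha Y) (fmap F f)).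

Definition preimage (F : Functor C C) (S : SubClass C) : SubClass C := {|
  sobj := fun X => sobj S (F X);
  smor := fun A B f => smor S (fmap F f)
|}.

End Functors.

Section Isomorphisms.
Context {C : Category}.

Lemma is_iso_inv {A B : C} (phi : Hom A B) (psi : Hom B A) :
  comp psi phi = idm A -> comp phi psi = idm B -> is_iso psi.
Proof. intros H1 H2. exists phi. split; assumption. Qed.

Lemma fmap_is_iso (F : Functor C C) {A B : C} (phi : Hom A B) :
  is_iso phi -> is_iso (fmap F phi).
Proof.
  intros [psi [H1 H2]]. exists (fmap F psi).
  rewrite <- !fmap_comp, H1, H2, !fmap_id. split; reflexivity.
Qed.

Lemma sobj_iso_inv (S : SubClass C) {X Y : C} (phi : Hom X Y) :
  iso_closed S -> is_iso phi -> sobj S Y -> sobj S X.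
Proof.
  intros HS [psi [H1 H2]] HY.
  exact (proj1 (HS _ _ psi HY (is_iso_inv phi psi H1 H2))).
Qed.

Lemma smor_of_iso_square (S : SubClass C) {A A' B B' : C}
  (phi : Hom A A') (psi : Hom B B') (f : Hom A B) (h : Hom A' B') :
  is_subcategory S -> iso_closed S -> is_iso phi -> is_iso psi ->
  comp h phi = comp psi f -> smor S f -> smor S h.
Proof.
  intros [Hends [_ Hcomp]] HS Hphi Hpsi E Hf.
  destruct (Hends _ _ _ Hf) as [HA HB].
  destruct Hphi as [phi' [P1 P2]].
  assert (HA' : sobj S A') by exact (proj1 (HS _ _ phi HA (ex_intro _ phi' (conj P1 P2)))).
  assert (Hphi' : smor S phi') by exact (proj2 (HS _ _ phi' HA' (is_iso_inv phi phi' P1 P2))).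
  assert (Hpsi' : smor S psi) by exact (proj2 (HS _ _ psi HB Hpsi)).
  replace h with (comp (comp psi f) phi').
  - apply Hcomp; [exact Hphi' | apply Hcomp; assumption].
  - rewrite <- E, <- comp_assoc, P2, comp_id_r. reflexivity.
Qed.

Lemma smor_iso_square (S : SubClass C) {A A' B B' : C}
  (phi : Hom A A') (psi : Hom B B') (f : Hom A B) (h : Hom A' B') :
  is_subcategory S -> iso_closed S -> is_iso phi -> is_iso psi ->
  comp h phi = comp psi f -> (smor S f <-> smor S h).
Proof.
  intros HSub HS Hphi Hpsi E. split.
  - exact (smor_of_iso_square S phi psi f h HSub HS Hphi Hpsi E).
  - destruct Hphi as [phi' [P1 P2]]. destruct Hpsi as [psi' [Q1 Q2]].
    apply (smor_of_iso_square S phi' psi' h f HSub HS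
             (is_iso_inv phi phi' P1 P2) (is_iso_inv psi psi' Q1 Q2)).
    rewrite <- (comp_id_l (comp f phi')), <- Q1, <- comp_assoc,
      (comp_assoc psi f phi'), <- E, <- comp_assoc, P2, comp_id_r.
    reflexivity.
Qed.

End Isomorphisms.

Section Closures.
Context {C : Category}.

Lemma sub_le_refl (S : SubClass C) : sub_le S S.
Proof. split; auto. Qed.

Lemma sub_le_trans (D S S' : SubClass C) : sub_le D S -> sub_le S S' -> sub_le D S'.
Proof. intros [Ho Hm] [Ho' Hm']. split; auto. Qed.

Lemma sub_eq_sym (D S : SubClass C) : sub_eq D S -> sub_eq S D.
Proof. intros [H1 H2]. split; assumption. Qed.

Lemma sub_eq_trans (D S S' : SubClass C) : sub_eq D S -> sub_eq S S' -> sub_eq D S'.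
Proof. intros [H1 H2] [H3 H4]. split; eapply sub_le_trans; eassumption. Qed.

Lemma sub_le_iso_closure (D : SubClass C) : sub_le D (iso_closure D).
Proof. split; intros until 1; intros S _ _ [Ho Hm]; auto. Qed.

Lemma iso_closure_min (D S : SubClass C) :
  is_subcategory S -> iso_closed S -> sub_le D S -> sub_le (iso_closure D) S.
Proof. intros HSub HS HD. split; intros until 1; auto. Qed.

Lemma iso_closure_subcategory (D : SubClass C) : is_subcategory (iso_closure D).
Proof.
  split; [|split]; simpl.
  - intros A B f Hf.
    split; intros S HSub HS HD; apply ((proj1 HSub) _ _ f (Hf S HSub HS HD)).
  - intros A HA S HSub HS HD. apply (proj1 (proj2 HSub)), HA; assumption.
  - intros A B E g f Hf Hg S HSub HS HD. apply (proj2 (proj2 HSub)); auto.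
Qed.

Lemma iso_closure_iso_closed (D : SubClass C) : iso_closed (iso_closure D).
Proof.
  intros X X' phi HX Hphi. simpl.
  split; intros S HSub HS HD; apply (HS _ _ phi (HX S HSub HS HD) Hphi).
Qed.

Lemma preimage_subcategory (F : Functor C C) (S : SubClass C) :
  is_subcategory S -> is_subcategory (preimage F S).
Proof.
  intros [Hends [Hid Hcomp]]. split; [|split]; simpl.
  - intros A B f. apply Hends.
  - intros A HA. rewrite fmap_id. apply Hid, HA.
  - intros A B E g f Hf Hg. rewrite fmap_comp. apply Hcomp; assumption.
Qed.

Lemma preimage_iso_closed (F : Functor C C) (S : SubClass C) :
  iso_closed S -> iso_closed (preimage F S).
Proof. intros HS X X' phi HX Hphi. exact (HS _ _ _ HX (fmap_is_iso F phi Hphi)). Qed.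

Lemma preimage_sub_le (F : Functor C C) (S S' : SubClass C) :
  sub_le S S' -> sub_le (preimage F S) (preimage F S').
Proof. intros [Ho Hm]. split; intros until 1; simpl; auto. Qed.

Lemma sub_le_image (F : Functor C C) (I S : SubClass C) :
  sub_le (image F I) S <-> sub_le I (preimage F S).
Proof.
  split; intros [Ho Hm]; split; simpl in *.
  - intros X HX. apply Ho. exists X. split; [assumption | reflexivity].
  - intros X Y f Hf. apply Hm. exists X, Y, f. split; [assumption | reflexivity].
  - intros Y [X [HX <-]]. apply Ho, HX.
  - intros A B h [X [Y [f [Hf E]]]].
    pose (P := fun s : {A' : C & {B' : C & Hom A' B'}} => smor S (projT2 (projT2 s))).
    change (P (existT _ A (existT _ B h))). rewrite E. exact (Hm _ _ _ Hf).
Qed.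

Lemma sub_le_preimage_iso_closure_image (F : Functor C C) (I : SubClass C) :
  sub_le I (preimage F (iso_closure (image F I))).
Proof. apply sub_le_image, sub_le_iso_closure. Qed.

Lemma iso_closure_image_le (F : Functor C C) (I S : SubClass C) :
  is_subcategory S -> iso_closed S ->
  sub_le I (preimage F S) -> sub_le (iso_closure (image F I)) S.
Proof. intros HSub HS HI. apply iso_closure_min, sub_le_image; assumption. Qed.

End Closures.

Section ImagesUpToIsomorphism.
Context {C : Category}.

Lemma preimage_natural_iso (F F' : Functor C C) (alpha : forall X, Hom (F X) (F' X))
  (S : SubClass C) :
  natural_iso F F' alpha -> is_subcategory S -> iso_closed S ->
  sub_eq (preimage F S) (preimage F' S).
Proof.
  intros [Hiso Hnat] HSub HS.
  assert (Hmor : forall X Y (f : Hom X Y), smor S (fmap F f) <-> smor S (fmap F' f)).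
  { intros X Y f. exact (smor_iso_square S _ _ _ _ HSub HS (Hiso X) (Hiso Y) (Hnat X Y f)). }
  split; split; simpl; intros X.
  - intros HX. exact (proj1 (HS _ _ (alpha X) HX (Hiso X))).
  - intros Y f. apply Hmor.
  - apply (sobj_iso_inv S (alpha X) HS (Hiso X)).
  - intros Y f. apply Hmor.
Qed.

Lemma iso_closure_image_natural_iso (F F' : Functor C C)
  (alpha : forall X, Hom (F X) (F' X)) (I : SubClass C) :
  natural_iso F F' alpha ->
  sub_eq (iso_closure (image F I)) (iso_closure (image F' I)).
Proof.
  intros Halpha.
  assert (Hpre : forall S, is_subcategory S -> iso_closed S ->
            sub_eq (preimage F S) (preimage F' S))
    by (intros S; exact (preimage_natural_iso F F' alpha S Halpha)).
  split; apply iso_closure_image_le;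
    auto using iso_closure_subcategory, iso_closure_iso_closed;
    (eapply sub_le_trans; [apply sub_le_preimage_iso_closure_image |]);
    apply Hpre; auto using iso_closure_subcategory, iso_closure_iso_closed.
Qed.

Lemma iso_closure_image_id (I : SubClass C) :
  is_subcategory I -> iso_closed I -> sub_eq (iso_closure (image functor_id I)) I.
Proof.
  intros HSub HS. split.
  - apply iso_closure_image_le; [assumption | assumption | exact (sub_le_refl I)].
  - exact (sub_le_preimage_iso_closure_image functor_id I).
Qed.

Lemma iso_closure_image_comp (F H : Functor C C) (I : SubClass C) :
  sub_eq (iso_closure (image F (iso_closure (image H I))))
         (iso_closure (image (functor_comp F H) I)).
Proof.
  split; apply iso_closure_image_le;
    auto using iso_closure_subcategory, iso_closure_iso_closed.
  (* preimage (functor_comp F H) S is convertible to preimage H (preimage F S). *)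
  - apply iso_closure_image_le;
      auto using preimage_subcategory, preimage_iso_closed,
                 iso_closure_subcategory, iso_closure_iso_closed.
    exact (sub_le_preimage_iso_closure_image (functor_comp F H) I).
  - apply (sub_le_trans _ _ _ (sub_le_preimage_iso_closure_image H I)).
    exact (preimage_sub_le H _ _ (sub_le_preimage_iso_closure_image F _)).
Qed.

End ImagesUpToIsomorphism.

Lemma action_unit_natural_iso {G : Group} {C : SemigroupalCategory} (T : Action G C) :
  natural_iso functor_id (T gone) (uu T).
Proof. split; [exact (uu_iso T) | exact (@uu_nat G C T)]. Qed.

Lemma action_mul_natural_iso {G : Group} {C : SemigroupalCategory} (T : Action G C)
  (g h : G) :
  natural_iso (functor_comp (T g) (T h)) (T (gmul g h)) (gam T g h).
Proof. split; [exact (gam_iso T g h) | exact (@gam_nat G C T g h)]. Qed.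

Theorem lemma2p19 (G : Group) (C : SemigroupalCategory) (T : Action G C)
  (I : SubClass C) :
  is_ideal I ->
  sub_eq (iso_closure (image (T gone) I)) I /\
  (forall g h : G,
     sub_eq (iso_closure (image (T g) (iso_closure (image (T h) I))))
            (iso_closure (image (T (gmul g h)) I))).
Proof.
  intros [HSub [HS _]]. split.
  - apply (sub_eq_trans _ (iso_closure (image functor_id I))).
    + apply sub_eq_sym, (iso_closure_image_natural_iso _ _ _ I (action_unit_natural_iso T)).
    + apply iso_closure_image_id; assumption.
  - intros g h.
    apply (sub_eq_trans _ (iso_closure (image (functor_comp (T g) (T h)) I))).
    + apply iso_closure_image_comp.
    + apply (iso_closure_image_natural_iso _ _ _ I (action_mul_natural_iso T g h)).
Qed.
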